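(* Let $\Gamma$ be a distance-regular graph with classical parameters $(D,b,\alpha,\beta)$ such that $b\ge2$ and $D\ge3$. Assume $\Gamma$ has the PLS$(\gamma)$ property for some $\gamma\ge3$, with lines the maximal cliques having at least $\gamma$ vertices. Let $r=[D]$. Then every vertex lies on at least $r$ lines, and a vertex lies on exactly $r$ lines if and only if it is a Delsarte vertex.
   Context: Distance-regular graph with intersection numbers $b_i,c_i$, valency $k=b_0$. For integer $b\ne1$, $[j]=\frac{b^j-1}{b-1}$. Classical parameters $(D,b,\alpha,\beta)$: diameter $D$, $b_i=([D]-[i])(\beta-\alpha[i])$, $c_i=[i](1+\alpha[i-1])$. A partial linear space is an incidence structure of points and lines in which any two distinct points lie on at most one common line; its point graph has points as vertices, adjacent iff on a common line. $\Gamma$ has the PLS$(\gamma)$ property ($\gamma\ge3$) if $\Gamma$ is the point graph of a partial linear space $(V(\Gamma),\mathcal L,\in)$ where $\mathcal L$ is the set of maximal cliques of $\Gamma$ with at least $\gamma$ vertices. A Delsarte clique is a clique with $1+\frac{k}{-\theta_{\min}}$ vertices, $\theta_{\min}$ the smallest adjacency eigenvalue. A Delsarte vertex is a vertex all of whose lines in $\mathcal L$ are Delsarte cliques. *)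

From HB Require Import structures.
From mathcomp Require Import all_boot all_order all_algebra.
From mathcomp Require Import reals.
Set Implicit Arguments. Unset Strict Implicit. Unset Printing Implicit Defensive.
Import Order.TTheory GRing.Theory Num.Theory.
Local Open Scope ring_scope.

Section Graphs.
Variable T : finType.
Variable e : rel T.

Definition simple_graph := symmetric e /\ irreflexive e.

Definition nbhd (x : T) : {set T} := [set y | e x y].

Fixpoint ball (n : nat) (x : T) : {set T} :=
  match n with
  | 0 => [set x]
  | n'.+1 => ball n' x :|: [set y | [exists z in ball n' x, e z y]]
  end.

Definition sphere (n : nat) (x : T) : {set T} :=
  match n with
  | 0 => [set x]
  | n'.+1 => ball n'.+1 x :\: ball n' x
  end.

Definition distance_regular (D : nat) (bi ci : nat -> nat) : Prop :=
  [/\ simple_graph,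
      (forall x y : T, y \in ball D x),
      (exists x y : T, y \in sphere D x) &
      (forall (i : nat) (x y : T), (i <= D)%N -> y \in sphere i x ->
         ((i < D)%N -> #|sphere i.+1 x :&: nbhd y| = bi i) /\
         ((1 <= i)%N -> #|sphere i.-1 x :&: nbhd y| = ci i))].

Definition clique (C : {set T}) : bool :=
  [forall x in C, forall y in C, (x != y) ==> e x y].

Definition maximal_clique (C : {set T}) : bool :=
  clique C && [forall C' : {set T}, (clique C' && (C \subset C')) ==> (C' == C)].

Definition is_line (gamma : nat) (C : {set T}) : bool :=
  maximal_clique C && (gamma <= #|C|)%N.

Definition lines_through (gamma : nat) (x : T) : {set {set T}} :=
  [set C : {set T} | is_line gamma C && (x \in C)].

(* Gamma is the point graph of the partial linear space (V, lines, \in) *)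
Definition PLS_property (gamma : nat) : Prop :=
  (3 <= gamma)%N /\
  (forall x y : T, x != y ->
     forall L1 L2 : {set T}, is_line gamma L1 -> is_line gamma L2 ->
       x \in L1 -> y \in L1 -> x \in L2 -> y \in L2 -> L1 = L2) /\
  (forall x y : T, x != y ->
     (e x y <-> exists L : {set T}, [/\ is_line gamma L, x \in L & y \in L])).

Section Spectral.
Variable R : realType.

Definition adjacency_matrix : 'M[R]_#|T| :=
  \matrix_(i, j) (e (enum_val i) (enum_val j))%:R.

Definition smallest_eigenvalue (theta : R) : Prop :=
  eigenvalue adjacency_matrix theta /\
  (forall mu : R, eigenvalue adjacency_matrix mu -> theta <= mu).

Definition delsarte_clique (k : nat) (C : {set T}) : Prop :=
  clique C /\
  exists theta : R, smallest_eigenvalue theta /\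
    (#|C|%:R : R) = 1 + k%:R / (- theta).

Definition delsarte_vertex (k gamma : nat) (x : T) : Prop :=
  forall C : {set T}, C \in lines_through gamma x -> delsarte_clique k C.
End Spectral.
End Graphs.

Definition qbr (R : realType) (b : int) (j : nat) : R :=
  ((b%:~R) ^+ j - 1) / (b%:~R - 1).

Definition classical_parameters (R : realType) (D : nat) (b : int)
  (alpha beta : R) (bi ci : nat -> nat) : Prop :=
  b != 1 /\
  (forall i : nat, (i < D)%N ->
     (bi i)%:R = (qbr R b D - qbr R b i) * (beta - alpha * qbr R b i)) /\
  (forall i : nat, (1 <= i <= D)%N ->
     (ci i)%:R = qbr R b i * (1 + alpha * qbr R b i.-1)).

(* The argument works for any distance-regular graph with an eigenvalue theta admitting
   the factorisation [rho_factor] with all rho_i > 0; classical parameters with b >= 2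
   supply theta = -[D] and rho_i = ([D] - [i]) / [i+1].  Positivity of rho makes the
   standard sequence of theta alternate in sign, which forces theta to be the smallest
   eigenvalue, and the Gram matrix of the spherical functions of theta gives Delsarte's
   bound |C| - 1 <= k / -theta for every clique C.  As each neighbour of x lies on
   exactly one line through x, k is the sum of |L| - 1 over the r lines L through x, so
   k <= r k / [D], with equality exactly when all these lines are Delsarte cliques. *)

From HB Require Import structures.
From mathcomp Require Import all_boot all_order all_algebra.
From mathcomp Require Import reals.
From mathcomp Require Import zify ring.
Set Implicit Arguments. Unset Strict Implicit. Unset Printing Implicit Defensive.
Import Order.TTheory GRing.Theory Num.Theory.

Section Distance.
Variables (T : finType) (e : rel T).
Hypotheses (e_sym : symmetric e) (e_irr : irreflexive e).

Lemma ball_subset m n x : m <= n -> ball e m x \subset ball e n x.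
Proof.
elim: n => [|n IHn]; first by rewrite leqn0 => /eqP ->.
rewrite leq_eqVlt ltnS => /predU1P [-> //|/IHn sub_mn].
by apply: subset_trans sub_mn _; rewrite /= subsetUl.
Qed.

Lemma mem_ball_adj n x y w : y \in ball e n x -> e y w -> w \in ball e n.+1 x.
Proof.
by move=> y_n e_yw; rewrite /= !inE; apply/orP; right; apply/existsP; exists y; rewrite y_n.
Qed.

Lemma mem_sphere0 x y : (y \in sphere e 0 x) = (y == x).
Proof. by rewrite inE. Qed.

Lemma mem_sphereS n x y :
  (y \in sphere e n.+1 x) = (y \in ball e n.+1 x) && (y \notin ball e n x).
Proof. by rewrite inE andbC. Qed.

Lemma sphere_sub_ball n x y : y \in sphere e n x -> y \in ball e n x.
Proof. by case: n => [//|n]; rewrite mem_sphereS => /andP []. Qed.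

Lemma sphere_notin_ball m n x y : y \in sphere e n x -> m < n -> y \notin ball e m x.
Proof.
case: n => [//|n]; rewrite mem_sphereS ltnS => /andP [_ y_n] le_mn.
by apply: contra y_n; apply/subsetP/ball_subset.
Qed.

Lemma sphere_inj i j x y : y \in sphere e i x -> y \in sphere e j x -> i = j.
Proof.
move=> y_i y_j; case: (ltngtP i j) => // [lt_ij|lt_ji].
  by move: (sphere_notin_ball y_j lt_ij); rewrite (sphere_sub_ball y_i).
by move: (sphere_notin_ball y_i lt_ji); rewrite (sphere_sub_ball y_j).
Qed.

Lemma ball_sphere n x y : y \in ball e n x -> exists2 i, i <= n & y \in sphere e i x.
Proof.
elim: n => [|n IHn] y_n; first by exists 0.
have [/IHn [i le_in y_i]|y_notn] := boolP (y \in ball e n x).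
  by exists i => //; apply: leqW.
by exists n.+1; rewrite ?mem_sphereS ?y_n.
Qed.

Lemma sphere_pred n x y : y \in sphere e n.+1 x -> exists2 w, w \in sphere e n x & e w y.
Proof.
rewrite mem_sphereS /= !inE => /andP [/orP [-> //|/existsP [w /andP [w_n e_wy]]] y_notn].
exists w => //; case: n w_n y_notn => [|n] w_n y_notn; first exact: w_n.
by rewrite mem_sphereS w_n; apply: contra y_notn => w_n'; apply: mem_ball_adj e_wy.
Qed.

Lemma sphere_adj i j x y w :
  y \in sphere e i x -> w \in sphere e j x -> e y w -> j <= i.+1 /\ i <= j.+1.
Proof.
move=> y_i w_j e_yw; split; rewrite leqNgt; apply/negP => lt_ij.
  by move: (sphere_notin_ball w_j lt_ij); rewrite (mem_ball_adj (sphere_sub_ball y_i) e_yw).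
rewrite e_sym in e_yw.
by move: (sphere_notin_ball y_i lt_ij); rewrite (mem_ball_adj (sphere_sub_ball w_j) e_yw).
Qed.

Lemma sphere1E x y : (y \in sphere e 1 x) = e x y.
Proof.
apply/idP/idP => [/sphere_pred [w]|e_xy]; first by rewrite mem_sphere0 => /eqP ->.
rewrite mem_sphereS (mem_ball_adj _ e_xy) ?inE //=.
by apply: contraTneq e_xy => ->; rewrite e_irr.
Qed.

Lemma clique_adj (C : {set T}) x y :
  clique e C -> x \in C -> y \in C -> x != y -> e x y.
Proof. by move=> /forallP/(_ x)/implyP xC /xC/forallP/(_ y)/implyP yC /yC/implyP. Qed.

End Distance.

Local Open Scope ring_scope.

Lemma sumr_delta (R : pzSemiRingType) n m (G : nat -> R) :
  \sum_(i < n) (i == m :> nat)%:R * G i = if (m < n)%N then G m else 0.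
Proof.
rewrite -(big_ord1_eq (@GRing.add R) G) [RHS]big_mkcond; apply: eq_bigr => i _.
by case: eqP; rewrite ?mul1r ?mul0r.
Qed.

Lemma sum_mem_card (R : pzSemiRingType) (T : finType) (S : {set T}) :
  \sum_x (x \in S)%:R = #|S|%:R :> R.
Proof.
rewrite -sum1_card natr_sum [RHS]big_mkcond; apply: eq_bigr => x _.
by case: (x \in S).
Qed.

Lemma sum_le_card_mul (R : numDomainType) (I : finType) (A : {set I}) (F : I -> R) m :
  (forall i, i \in A -> F i <= m) ->
  \sum_(i in A) F i <= #|A|%:R * m /\
  (\sum_(i in A) F i = #|A|%:R * m <-> forall i, i \in A -> F i = m).
Proof.
move=> F_le; have sumA : \sum_(i in A) m = #|A|%:R * m by rewrite sumr_const mulr_natl.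
split; first by rewrite -sumA; apply: ler_sum.
split=> [eq_sum i iA|F_eq]; last by rewrite -sumA; apply: eq_bigr.
have gap_ge0 j : j \in A -> 0 <= m - F j by move=> jA; rewrite subr_ge0 F_le.
apply/eqP; rewrite eq_sym -subr_eq0; apply/eqP; apply: (psumr_eq0P gap_ge0) iA.
by rewrite sumrB eq_sum sumA subrr.
Qed.

Section GaussianNumbers.
Variables (R : realType) (b : int).
Hypothesis b_gt1 : 1 < b.

Lemma qbr0 : qbr R b 0 = 0.
Proof. by rewrite /qbr expr0 subrr mul0r. Qed.

Lemma qbrS j : qbr R b j.+1 = qbr R b j + b%:~R ^+ j.
Proof.
have b_neq1 : b%:~R - 1 != 0 :> R by rewrite subr_eq0 gt_eqF ?ltr1z.
by rewrite /qbr exprS; field.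
Qed.

Lemma qbr_lt m n : (m < n)%N -> qbr R b m < qbr R b n.
Proof.
have b_pow_gt0 j : 0 < b%:~R ^+ j :> R by rewrite exprn_gt0 // ltr0z (lt_trans ltr01).
elim: n => [//|n IHn]; rewrite ltnS leq_eqVlt => /predU1P [->|/IHn lt_mn].
  by rewrite qbrS ltrDl.
by rewrite (lt_trans lt_mn) // qbrS ltrDl.
Qed.

Lemma qbr_gt0 n : (0 < n)%N -> 0 < qbr R b n.
Proof. by rewrite -qbr0; apply: qbr_lt. Qed.

End GaussianNumbers.

Section DistanceRegular.
Variables (R : realType) (T : finType) (e : rel T) (D : nat) (bi ci : nat -> nat).
Hypotheses (e_sym : symmetric e) (e_irr : irreflexive e) (D_gt0 : (0 < D)%N).
Hypothesis ball_D : forall x y : T, y \in ball e D x.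
Hypothesis sphere_D : exists x y : T, y \in sphere e D x.
Hypothesis drg : forall (i : nat) (x y : T), (i <= D)%N -> y \in sphere e i x ->
  ((i < D)%N -> #|sphere e i.+1 x :&: nbhd e y| = bi i) /\
  ((1 <= i)%N -> #|sphere e i.-1 x :&: nbhd e y| = ci i).

(* Intersection numbers as reals, with b_i = 0 for i >= D and c_i = 0 outside
   1..D, so that the three-term recurrences below have no boundary cases. *)
Definition kR : R := (bi 0)%:R.
Definition bR i : R := if (i < D)%N then (bi i)%:R else 0.
Definition cR i : R := if (0 < i <= D)%N then (ci i)%:R else 0.
Definition aR i : R := kR - bR i - cR i.

(* Row i of the intersection matrix with its diagonal entry d left free:
   [card_sphere_nbhd_off] counts the off-diagonal entries, and only then is the
   diagonal entry identified as a_i in [card_sphere_nbhd]. *)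
Definition tridiag (d : R) (i j : nat) : R :=
  (j.+1 == i)%:R * cR i + (j == i)%:R * d + (j == i.+1)%:R * bR i.

Lemma bR_out : bR D = 0. Proof. by rewrite /bR ltnn. Qed.
Lemma cR_out : cR D.+1 = 0. Proof. by rewrite /cR ltnn andbF. Qed.
Lemma bR0 : bR 0 = kR. Proof. by rewrite /bR D_gt0. Qed.
Lemma aR0 : aR 0 = 0. Proof. by rewrite /aR bR0 /cR /= subrr subr0. Qed.

Lemma sum_tridiag_row d i (F : nat -> R) : (i <= D)%N ->
  \sum_(j < D.+1) tridiag d i j * F j = cR i * F i.-1 + d * F i + bR i * F i.+1.
Proof.
move=> le_iD; rewrite /tridiag.
under eq_bigr do rewrite !mulrDl -!mulrA.
rewrite !big_split /= (sumr_delta _ _ (fun j => d * F j)).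
rewrite (sumr_delta _ _ (fun j => bR i * F j)) !ltnS le_iD.
have -> : \sum_(j < D.+1) (j.+1 == i)%:R * (cR i * F j) = cR i * F i.-1.
  case: i le_iD => [|i] le_iD.
    by rewrite /cR /= mul0r big1 // => j _; rewrite mul0r.
  under eq_bigr do rewrite eqSS.
  by rewrite (sumr_delta _ _ (fun j => cR i.+1 * F j)) ltnS ltnW.
by case: ltnP => // le_Di; rewrite /bR (leq_gtF le_Di) mul0r.
Qed.

Lemma sum_tridiag_col j (F : nat -> R) : (j <= D)%N ->
  \sum_(i < D.+1) F i * tridiag (aR i) i j =
    F j.+1 * cR j.+1 + F j * aR j + (if j is j'.+1 then F j' * bR j' else 0).
Proof.
move=> le_jD; rewrite /tridiag.
under eq_bigr do rewrite 2!mulrDr !(mulrCA (F _)) !(eq_sym j) (eq_sym j.+1).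
rewrite !big_split /= (sumr_delta _ _ (fun i => F i * cR i)).
rewrite (sumr_delta _ _ (fun i => F i * aR i)) !ltnS le_jD.
have -> : (if (j < D)%N then F j.+1 * cR j.+1 else 0) = F j.+1 * cR j.+1.
  by case: ltnP => // le_Dj; rewrite /cR (leq_gtF le_Dj) andbF mulr0.
case: j le_jD => [|j] le_jD.
  by rewrite big1 ?addr0 // => i _; rewrite mul0r.
under eq_bigr do rewrite eqSS.
by rewrite (sumr_delta _ _ (fun i => F i * bR i)) ltnS ltnW.
Qed.

Lemma exists_sphere z y : exists2 i, (i <= D)%N & y \in sphere e i z.
Proof. exact: ball_sphere (ball_D z y). Qed.

Definition spherical (z : T) (u : nat -> R) (y : T) : R :=
  \sum_(j < D.+1) (y \in sphere e j z)%:R * u j.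

Lemma sphericalE z u y i : (i <= D)%N -> y \in sphere e i z -> spherical z u y = u i.
Proof.
move=> le_iD y_i; rewrite /spherical (bigD1 (Ordinal (le_iD : (i < D.+1)%N))) //=.
rewrite y_i mul1r big1 ?addr0 // => j ne_ji.
case: (boolP (y \in sphere e j z)) => [y_j|_]; last by rewrite mul0r.
by move: ne_ji; rewrite -val_eqE /= (sphere_inj y_i y_j) eqxx.
Qed.

Lemma sum_sphere_indicator z w : \sum_(j < D.+1) (w \in sphere e j z)%:R = 1 :> R.
Proof.
have [i le_iD w_i] := exists_sphere z w.
have := sphericalE (fun _ => 1) le_iD w_i; rewrite /spherical.
by under eq_bigr do rewrite mulr1.
Qed.

Lemma card_setI_nbhd (S : {set T}) y :
  #|S :&: nbhd e y|%:R = \sum_w (e y w)%:R * (w \in S)%:R :> R.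
Proof.
rewrite -sum_mem_card; apply: eq_bigr => w _.
by rewrite !inE; case: (w \in S); case: (e y w); rewrite ?mulr1 ?mulr0.
Qed.

Lemma card_nbhd y : #|nbhd e y| = bi 0.
Proof.
have y_0 : y \in sphere e 0 y by rewrite mem_sphere0.
rewrite -((drg (leq0n D) y_0).1 D_gt0); apply: eq_card => w.
by rewrite in_setI sphere1E // !inE andbb.
Qed.

Lemma sum_card_sphere_nbhd z y :
  \sum_(j < D.+1) #|sphere e j z :&: nbhd e y|%:R = kR.
Proof.
rewrite /kR -(card_nbhd y) -[in RHS](setTI (nbhd e y)) card_setI_nbhd.
under eq_bigr do rewrite card_setI_nbhd.
rewrite exchange_big /=; apply: eq_bigr => w _.
by rewrite -big_distrr /= sum_sphere_indicator inE.
Qed.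

Lemma card_sphere_nbhd_off z y i j : (i <= D)%N -> (j <= D)%N -> y \in sphere e i z ->
  #|sphere e j z :&: nbhd e y|%:R = tridiag #|sphere e i z :&: nbhd e y|%:R i j.
Proof.
move=> le_iD le_jD y_i; rewrite /tridiag.
have [ji|/negbTE ne_ji] := eqVneq j.+1 i.
  subst i; have [_ c_i] := drg le_iD y_i.
  by rewrite c_i // /cR le_iD !ltn_eqF // mul1r !mul0r !addr0.
have [-> |/negbTE ne_ij] := eqVneq j i.
  by rewrite (ltn_eqF (ltnSn i)) /=; ring.
have [ji1|/negbTE ne_ij1] := eqVneq j i.+1.
  subst j; have [b_i _] := drg le_iD y_i.
  by rewrite b_i // /bR le_jD /=; ring.
rewrite !mul0r !addr0; apply/eqP.
rewrite pnatr_eq0 cards_eq0; apply/eqP/setP => w; rewrite !inE.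
apply/negP => /andP [w_j e_yw].
have [le_ji le_ij] := sphere_adj e_sym y_i w_j e_yw.
by move: ne_ji ne_ij ne_ij1; lia.
Qed.

Lemma card_sphere_nbhd z y i j : (i <= D)%N -> (j <= D)%N -> y \in sphere e i z ->
  #|sphere e j z :&: nbhd e y|%:R = tridiag (aR i) i j.
Proof.
move=> le_iD le_jD y_i; rewrite (card_sphere_nbhd_off le_iD le_jD y_i).
congr tridiag; rewrite /aR -(sum_card_sphere_nbhd z y).
under eq_bigr => k _ do
  rewrite (card_sphere_nbhd_off le_iD (leq_ord k) y_i) -[tridiag _ _ _]mulr1.
by rewrite (sum_tridiag_row _ (fun=> 1)) //; ring.
Qed.

Definition adj (v : T -> R) (y : T) : R := \sum_w (e y w)%:R * v w.

Definition eigenfun (mu : R) (v : T -> R) : Prop := forall y, adj v y = mu * v y.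

Lemma eigenvalue_adjacencyP mu :
  eigenvalue (adjacency_matrix e R) mu <-> exists2 v, eigenfun mu v & exists y, v y != 0.
Proof.
split=> [/eigenvalueP [w w_eig w_neq0]|[v v_eig [y0 v_y0]]].
  exists (fun x => w 0 (enum_rank x)) => [y|].
    move/rowP/(_ (enum_rank y)): w_eig; rewrite !mxE => <-.
    rewrite /adj (big_enum_val (fun x => (e y x)%:R * w 0 (enum_rank x))) /=.
    by apply: eq_bigr => i _; rewrite !mxE enum_valK enum_rankK mulrC e_sym.
  have [i w_i|w0] := pickP (fun i => w 0 i != 0).
    by exists (enum_val i); rewrite enum_valK.
  by case/eqP: w_neq0; apply/rowP => j; rewrite !mxE; apply/eqP/negbFE/w0.
apply/eigenvalueP; exists (\row_i v (enum_val i)).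
  apply/rowP => j; rewrite !mxE; under eq_bigr do rewrite !mxE.
  rewrite -(big_enum_val (fun x => v x * (e x (enum_val j))%:R)) /= -v_eig /adj.
  by apply: eq_bigr => w _; rewrite mulrC e_sym.
by apply/eqP => /rowP/(_ (enum_rank y0)); rewrite !mxE enum_rankK; apply/eqP.
Qed.

Definition right_eigenseq (mu : R) (u : nat -> R) : Prop := forall i, (i <= D)%N ->
  cR i * u i.-1 + aR i * u i + bR i * u i.+1 = mu * u i.

Definition left_eigenseq (mu : R) (S : nat -> R) : Prop := forall j, (j <= D)%N ->
  S j.+1 * cR j.+1 + S j * aR j + (if j is j'.+1 then S j' * bR j' else 0) = mu * S j.

Lemma eigenfun_spherical mu z u : right_eigenseq mu u -> eigenfun mu (spherical z u).
Proof.
move=> u_eq y; have [i le_iD y_i] := exists_sphere z y.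
rewrite (sphericalE u le_iD y_i) -(u_eq i le_iD) -(sum_tridiag_row _ _ le_iD).
rewrite /adj /spherical; under eq_bigr do rewrite big_distrr /=.
rewrite exchange_big /=; apply: eq_bigr => j _.
rewrite -(card_sphere_nbhd le_iD (leq_ord j) y_i) card_setI_nbhd big_distrl /=.
by apply: eq_bigr => w _; rewrite mulrA.
Qed.

Definition sphere_sum (z : T) (v : T -> R) (j : nat) : R :=
  \sum_w (w \in sphere e j z)%:R * v w.

Lemma sphere_sum0 z v : sphere_sum z v 0 = v z.
Proof.
rewrite /sphere_sum (bigD1 z) //= set11 mul1r big1 ?addr0 // => w ne_wz.
by rewrite inE (negbTE ne_wz) mul0r.
Qed.

(* Double counting of the pairs (w, y) with w in sphere j z and y adjacent to w. *)
Lemma left_eigenseq_sphere_sum mu z v : eigenfun mu v -> left_eigenseq mu (sphere_sum z v).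
Proof.
move=> v_eig j le_jD; rewrite -(sum_tridiag_col _ le_jD).
transitivity (\sum_w v w * #|sphere e j z :&: nbhd e w|%:R).
  rewrite /sphere_sum; under eq_bigr do rewrite big_distrl /=.
  rewrite exchange_big /=; apply: eq_bigr => w _.
  have [i le_iD w_i] := exists_sphere z w.
  rewrite (card_sphere_nbhd le_iD le_jD w_i).
  rewrite -(sphericalE (fun i => tridiag (aR i) i j) le_iD w_i) /spherical big_distrr /=.
  by apply: eq_bigr => k _; rewrite mulrCA mulrA.
rewrite /sphere_sum big_distrr /=.
under [RHS]eq_bigr do rewrite mulrCA -v_eig /adj big_distrr /=.
rewrite [RHS]exchange_big /=; apply: eq_bigr => w _.
rewrite card_setI_nbhd big_distrr /=; apply: eq_bigr => y _.
by rewrite (e_sym y w); ring.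
Qed.

Lemma left_eigenseqZ mu a S : left_eigenseq mu S -> left_eigenseq mu (fun j => a * S j).
Proof.
move=> S_eq j le_jD; rewrite [RHS]mulrCA -(S_eq j le_jD).
by case: j {le_jD} => [|j] /=; ring.
Qed.

Lemma spheres_nonempty : exists z, forall n, (n <= D)%N -> exists y, y \in sphere e n z.
Proof.
have [z [y y_D]] := sphere_D; exists z => n le_nD.
rewrite -(subKn le_nD); elim: (D - n)%N (leq_subr n D) => [|m IHm] le_mD.
  by exists y; rewrite subn0.
have [w] := IHm (ltnW le_mD); rewrite (_ : (D - m = (D - m.+1).+1)%N); last by lia.
by case/sphere_pred => u u_m _; exists u.
Qed.

Lemma bR_gt0 i : (i < D)%N -> 0 < bR i.
Proof.
move=> lt_iD; have [z z_spheres] := spheres_nonempty.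
have [y y_i1] := z_spheres i.+1 lt_iD; have [w w_i e_wy] := sphere_pred y_i1.
rewrite /bR lt_iD ltr0n -((drg (ltnW lt_iD) w_i).1 lt_iD).
by apply/card_gt0P; exists y; rewrite in_setI y_i1 inE.
Qed.

Lemma cR_gt0 i : (0 < i <= D)%N -> 0 < cR i.
Proof.
case: i => [//|i] /= lt_iD; have [z z_spheres] := spheres_nonempty.
have [y y_i1] := z_spheres i.+1 lt_iD; have [w w_i e_wy] := sphere_pred y_i1.
rewrite /cR lt_iD ltr0n -((drg lt_iD y_i1).2 isT).
by apply/card_gt0P; exists w; rewrite in_setI w_i inE e_sym.
Qed.

Lemma bR_ge0 i : 0 <= bR i. Proof. by rewrite /bR; case: ifP. Qed.
Lemma cR_ge0 i : 0 <= cR i. Proof. by rewrite /cR; case: ifP. Qed.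
Lemma kR_gt0 : 0 < kR. Proof. by rewrite -bR0 bR_gt0. Qed.

Lemma cR1 : cR 1 = 1.
Proof.
have [z z_spheres] := spheres_nonempty; have [y y_1] := z_spheres 1%N D_gt0.
rewrite /cR D_gt0 -((drg D_gt0 y_1).2 isT) (_ : _ :&: _ = [set z]) ?cards1 //.
apply/setP => w; rewrite !inE; apply/andP/eqP => [[/eqP //]|->]; split=> //.
by rewrite e_sym -(sphere1E e_irr).
Qed.

Lemma left_eigenseq_uniq mu S S' : S 0 = S' 0 ->
  left_eigenseq mu S -> left_eigenseq mu S' -> forall j, (j <= D)%N -> S j = S' j.
Proof.
move=> eq0 S_eq S'_eq.
suff strong n : (n <= D)%N -> forall j, (j <= n)%N -> S j = S' j.
  by move=> j le_jD; apply: strong le_jD j (leqnn j).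
elim: n => [|n IHn] le_nD j; first by rewrite leqn0 => /eqP ->.
have {IHn} IH := IHn (ltnW le_nD).
rewrite leq_eqVlt ltnS => /predU1P [->|]; last exact: IH.
have prevE : (if n is n'.+1 then S n' * bR n' else 0) =
             (if n is n'.+1 then S' n' * bR n' else 0).
  by case: n {le_nD} IH => [//|n] IH; rewrite IH.
have c_neq0 : cR n.+1 != 0 by rewrite gt_eqF // cR_gt0.
have := S_eq n (ltnW le_nD).
rewrite (IH n) // prevE -(S'_eq n (ltnW le_nD)).
by move/addIr/addIr/(mulIf c_neq0).
Qed.

Section RhoFactorisation.
Variables (theta : R) (rho : nat -> R).
Hypothesis rho_gt0 : forall i, (i < D)%N -> 0 < rho i.
(* The rho i are the ratios - b_i u_(i+1) / (c_(i+1) u_i) of consecutive terms of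
   the standard sequence u of theta (std_seq below); [rho_factor] is the three-term
   recurrence of u divided by u_i, and rho > 0 says that u alternates in sign. *)
Hypothesis rho_factor : forall i, (i <= D)%N ->
  aR i - (if i is i'.+1 then bR i' / rho i' else 0) - cR i.+1 * rho i = theta.

Lemma rho_neq0 i : (i < D)%N -> rho i != 0.
Proof. by move/rho_gt0/gt_eqF ->. Qed.

Lemma bR_neq0 i : (i < D)%N -> bR i != 0.
Proof. by move/bR_gt0/gt_eqF ->. Qed.

Lemma theta_eq : theta = - rho 0.
Proof. by rewrite -(rho_factor (leq0n D)) aR0 cR1 /=; ring. Qed.

Lemma theta_lt0 : theta < 0.
Proof. by rewrite theta_eq oppr_lt0 rho_gt0. Qed.

Definition std_seq (j : nat) : R := \prod_(k < j) (- rho k * cR k.+1 / bR k).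
(* dual_seq j = k_j * std_seq j, where k_j = b_0 ... b_(j-1) / (c_1 ... c_j) is the
   size of a sphere of radius j. *)
Definition dual_seq (j : nat) : R := \prod_(k < j) - rho k.

Lemma std_seq0 : std_seq 0 = 1. Proof. exact: big_ord0. Qed.
Lemma dual_seq0 : dual_seq 0 = 1. Proof. exact: big_ord0. Qed.

Lemma std_seqS j : std_seq j.+1 = std_seq j * (- rho j * cR j.+1 / bR j).
Proof. exact: big_ord_recr. Qed.

Lemma dual_seqS j : dual_seq j.+1 = dual_seq j * - rho j.
Proof. exact: big_ord_recr. Qed.

Lemma right_eigenseq_std : right_eigenseq theta std_seq.
Proof.
move=> i le_iD; rewrite -(rho_factor le_iD).
have -> : bR i * std_seq i.+1 = - (cR i.+1 * rho i) * std_seq i.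
  rewrite std_seqS; case: (ltnP i D) => [/bR_neq0 b_neq0|le_Di]; first by field.
  have -> : i = D by apply/eqP; rewrite eqn_leq le_iD le_Di.
  by rewrite bR_out cR_out !mul0r oppr0 mul0r.
case: i le_iD => [|i] le_iD; first by rewrite /cR /=; ring.
have := rho_neq0 le_iD; have := bR_neq0 le_iD.
by rewrite std_seqS /= => b_neq0 r_neq0; field; rewrite b_neq0.
Qed.

Lemma left_eigenseq_dual : left_eigenseq theta dual_seq.
Proof.
move=> j le_jD; rewrite -(rho_factor le_jD) dual_seqS.
case: j le_jD => [|j] le_jD; first by rewrite dual_seq0; ring.
by have := rho_neq0 le_jD; rewrite dual_seqS => r_neq0; field.
Qed.

Lemma dual_std_ge0 j : 0 <= dual_seq j * std_seq j.
Proof.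
rewrite -big_split /=; apply: prodr_ge0 => k _.
have -> : - rho k * (- rho k * cR k.+1 / bR k) = rho k ^+ 2 * (cR k.+1 / bR k) by ring.
by rewrite mulr_ge0 ?sqr_ge0 ?divr_ge0 ?bR_ge0 ?cR_ge0.
Qed.

Definition gram_const : R := \sum_(j < D.+1) std_seq j * dual_seq j.

Lemma gram_const_gt0 : 0 < gram_const.
Proof.
rewrite /gram_const big_ord_recl std_seq0 dual_seq0 mulr1 ltr_pwDl //.
by apply: sumr_ge0 => j _; rewrite mulrC dual_std_ge0.
Qed.

(* The sphere sums around z of the theta-eigenfunction [spherical z' std_seq] form a
   left eigensequence starting at its value at z, hence are proportional to dual_seq. *)
Lemma sum_spherical_std z z' :
  \sum_y spherical z std_seq y * spherical z' std_seq y = gram_const * spherical z' std_seq z.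
Proof.
set g := spherical z' std_seq.
have g_eig : eigenfun theta g := eigenfun_spherical z' right_eigenseq_std.
have sum_g j : (j <= D)%N -> sphere_sum z g j = g z * dual_seq j.
  apply: (left_eigenseq_uniq (mu := theta) (S' := fun j => g z * dual_seq j)).
  - by rewrite sphere_sum0 dual_seq0 mulr1.
  - exact: left_eigenseq_sphere_sum.
  - exact: left_eigenseqZ left_eigenseq_dual.
rewrite /spherical; under eq_bigr do rewrite big_distrl /=.
rewrite exchange_big /= /gram_const big_distrl /=; apply: eq_bigr => j _.
transitivity (std_seq j * sphere_sum z g j).
  by rewrite /sphere_sum big_distrr /=; apply: eq_bigr => y _; ring.
by rewrite (sum_g _ (leq_ord j)); ring.
Qed.

Lemma std_seq1 : std_seq 1 = theta / kR.
Proof. by rewrite std_seqS std_seq0 cR1 bR0 theta_eq mul1r mulr1. Qed.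

(* Delsarte's bound: by [sum_spherical_std] the sum over z in C of [spherical z std_seq]
   has squared norm gram_const |C| (1 + (|C| - 1) theta / k), which must be >= 0. *)
Lemma clique_card_le C : clique e C -> (#|C|%:R - 1) * - theta <= kR.
Proof.
move=> C_clique; set n : R := #|C|%:R.
have row_sum z : z \in C ->
    \sum_(z' in C) spherical z' std_seq z = n * std_seq 1 + (1 - std_seq 1).
  move=> zC; rewrite (eq_bigr (fun z' => std_seq 1 + (z' == z)%:R * (1 - std_seq 1))).
    rewrite big_split /= sumr_const mulr_natl -big_distrl /= (bigD1 z) //= eqxx.
    by rewrite big1 ?addr0 ?mul1r // => z' /andP [_ /negbTE ->].
  move=> z' z'C; have [->|ne_z'z] := eqVneq z' z.
    by rewrite (sphericalE _ (leq0n D)) ?mem_sphere0 // std_seq0 mul1r addrC subrK.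
  by rewrite (sphericalE _ D_gt0) ?sphere1E ?(clique_adj C_clique) // mul0r addr0.
have sum_sq : \sum_y (\sum_(z in C) spherical z std_seq y) ^+ 2 =
              gram_const * (n * (n * std_seq 1 + (1 - std_seq 1))).
  under eq_bigr do rewrite expr2 big_distrl /=.
  under eq_bigr do under eq_bigr do rewrite big_distrr /=.
  rewrite exchange_big /=; under eq_bigr do rewrite exchange_big /=.
  under eq_bigr => z zC do under eq_bigr do rewrite sum_spherical_std.
  under eq_bigr => z zC do rewrite -big_distrr /= row_sum //.
  by rewrite -big_distrr /= sumr_const -mulr_natl.
have : 0 <= n * (n * std_seq 1 + (1 - std_seq 1)).
  by rewrite -(pmulr_rge0 _ gram_const_gt0) -sum_sq sumr_ge0 // => y _; rewrite sqr_ge0.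
have [C0|C_gt0] := posnP #|C|.
  by rewrite /n C0 sub0r mulN1r opprK => _; apply: ltW (lt_trans theta_lt0 kR_gt0).
rewrite pmulr_rge0 ?ltr0n // std_seq1 => H.
have k_neq0 : kR != 0 by rewrite gt_eqF ?kR_gt0.
have -> : (n - 1) * - theta = kR - (n * (theta / kR) + (1 - theta / kR)) * kR by field.
by rewrite gerBl; apply: mulr_ge0 H (ltW kR_gt0).
Qed.

Definition alt_seq (S : nat -> R) (j : nat) : R := (-1) ^+ j * S j.

Lemma left_eigenseq_alt mu S j : left_eigenseq mu S -> (j <= D)%N ->
  - (alt_seq S j.+1 * cR j.+1) + alt_seq S j * aR j -
    (if j is j'.+1 then alt_seq S j' * bR j' else 0) = mu * alt_seq S j.
Proof.
move=> S_eq le_jD; rewrite /alt_seq [RHS]mulrCA -(S_eq j le_jD).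
by case: j {le_jD} => [|j]; rewrite !exprS /=; ring.
Qed.

Lemma alt_seq_gap mu S j : left_eigenseq mu S -> (j <= D)%N ->
  cR j.+1 * (alt_seq S j.+1 - rho j * alt_seq S j) =
  (theta - mu) * alt_seq S j +
  (if j is j'.+1 then bR j' / rho j' * (alt_seq S j - rho j' * alt_seq S j') else 0).
Proof.
move=> S_eq le_jD; rewrite mulrBl -(left_eigenseq_alt S_eq le_jD) -(rho_factor le_jD).
case: j le_jD => [|j] le_jD; first by ring.
by have := rho_neq0 le_jD => r_neq0; field.
Qed.

(* If mu < theta, [alt_seq_gap] keeps the alternating sequence and its gaps positive
   by induction, which is impossible at j = D where c_(D+1) = 0. *)
Lemma left_eigenseq_ge mu S : left_eigenseq mu S -> 0 < S 0 -> theta <= mu.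
Proof.
move=> S_eq S0_gt0; rewrite leNgt; apply/negP => lt_mu_theta.
pose W := alt_seq S; pose gap j := W j.+1 - rho j * W j.
pose prev j := if j is j'.+1 then bR j' / rho j' * gap j' else 0.
have gapE j : (j <= D)%N -> cR j.+1 * gap j = (theta - mu) * W j + prev j.
  by move=> le_jD; rewrite /gap /prev /W (alt_seq_gap S_eq le_jD); case: j le_jD.
have gap_gt0 j : (j <= D)%N -> 0 < W j -> 0 <= prev j -> 0 < cR j.+1 * gap j.
  by move=> le_jD Wj_gt0 prev_ge0; rewrite gapE // ltr_wpDr // mulr_gt0 ?subr_gt0.
have W_gt0 j : (j <= D)%N -> 0 < W j /\ 0 <= prev j.
  elim: j => [|j IHj] le_jD; first by rewrite /W /alt_seq expr0 mul1r.
  have [Wj_gt0 prev_ge0] := IHj (ltnW le_jD).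
  have := gap_gt0 j (ltnW le_jD) Wj_gt0 prev_ge0.
  rewrite pmulr_rgt0 ?cR_gt0 // => gap_j_gt0.
  have rho_j_gt0 := rho_gt0 le_jD.
  split.
    by rewrite -(subrK (rho j * W j) (W j.+1)); apply: addr_gt0 gap_j_gt0 (mulr_gt0 _ _).
  exact/mulr_ge0/ltW/gap_j_gt0/divr_ge0/ltW/rho_j_gt0/bR_ge0.
have [WD_gt0 prevD_ge0] := W_gt0 D (leqnn D).
by have := gap_gt0 D (leqnn D) WD_gt0 prevD_ge0; rewrite cR_out mul0r ltxx.
Qed.

Lemma eigenfun_ge mu v y : eigenfun mu v -> v y != 0 -> theta <= mu.
Proof.
move=> v_eig v_y; apply: (@left_eigenseq_ge mu (fun j => v y * sphere_sum y v j)).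
  exact/left_eigenseqZ/left_eigenseq_sphere_sum.
by rewrite sphere_sum0 -expr2 lt0r sqr_ge0 sqrf_eq0 v_y.
Qed.

Lemma smallest_eigenvalue_theta : smallest_eigenvalue e theta.
Proof.
split=> [|mu /eigenvalue_adjacencyP [v v_eig [y v_y]]]; last exact: eigenfun_ge v_eig v_y.
have [z _] := sphere_D; apply/eigenvalue_adjacencyP; exists (spherical z std_seq).
  exact: eigenfun_spherical right_eigenseq_std.
by exists z; rewrite (sphericalE _ (leq0n D)) ?mem_sphere0 // std_seq0 oner_neq0.
Qed.

Lemma smallest_eigenvalue_uniq t : smallest_eigenvalue e t -> t = theta.
Proof.
case=> t_eig t_min; have [theta_eig theta_min] := smallest_eigenvalue_theta.
by apply/eqP; rewrite eq_le t_min // theta_min.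
Qed.

Lemma delsarte_cliqueE C :
  delsarte_clique e R (bi 0) C <-> clique e C /\ #|C|%:R - 1 = kR / - theta.
Proof.
split=> [[C_clique [t [/smallest_eigenvalue_uniq -> ->]]]|[C_clique card_C]].
  by split=> //; rewrite addrC addKr.
split=> //; exists theta; split; first exact: smallest_eigenvalue_theta.
by rewrite -card_C addrC subrK.
Qed.

Section Lines.
Variable gamma : nat.
Hypothesis line_uniq : forall x y : T, x != y ->
  forall L1 L2 : {set T}, is_line e gamma L1 -> is_line e gamma L2 ->
  x \in L1 -> y \in L1 -> x \in L2 -> y \in L2 -> L1 = L2.
Hypothesis adj_line : forall x y : T, x != y ->
  (e x y <-> exists L : {set T}, [/\ is_line e gamma L, x \in L & y \in L]).

Lemma line_clique L : is_line e gamma L -> clique e L.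
Proof. by case/andP => /andP []. Qed.

Lemma adj_lines_through x y :
  (e x y)%:R = \sum_(L in lines_through e gamma x) (y \in L :\ x)%:R :> R.
Proof.
have [e_xy|not_e_xy] := boolP (e x y).
  have ne_xy : x != y by apply: contraTneq e_xy => ->; rewrite e_irr.
  have [L [L_line xL yL]] := (adj_line ne_xy).1 e_xy.
  have L_x : L \in lines_through e gamma x by rewrite inE L_line xL.
  rewrite (bigD1 L L_x) /= in_setD1 eq_sym ne_xy yL big1 ?addr0 // => L' /andP [L'_x ne_L'L].
  have /[!inE] /andP [L'_line xL'] : L' \in lines_through e gamma x := L'_x.
  apply/eqP; rewrite pnatr_eq0 eqb0; apply/negP => /andP [_ yL'].
  by move/eqP: ne_L'L; apply; apply: (line_uniq ne_xy).
rewrite big1 // => L; rewrite inE => /andP [L_line xL].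
apply/eqP; rewrite pnatr_eq0 eqb0 in_setD1; apply/negP => /andP [ne_yx yL].
by move/negP: not_e_xy; apply; apply: clique_adj (line_clique L_line) xL yL _; rewrite eq_sym.
Qed.

(* Every neighbour of x lies on exactly one line through x. *)
Lemma sum_lines_through x : kR = \sum_(L in lines_through e gamma x) (#|L|%:R - 1).
Proof.
rewrite /kR -(card_nbhd x) -(setTI (nbhd e x)) card_setI_nbhd.
under eq_bigr do rewrite inE mulr1 adj_lines_through.
rewrite exchange_big /=; apply: eq_bigr => L; rewrite inE => /andP [_ xL].
by rewrite sum_mem_card (cardsD1 x L) xL natrD addrC addKr.
Qed.

Lemma card_lines_through x :
  - theta <= #|lines_through e gamma x|%:R /\
  (#|lines_through e gamma x|%:R = - theta <-> delsarte_vertex e R (bi 0) gamma x).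
Proof.
set r : R := #|lines_through e gamma x|%:R.
have theta_gt0 : 0 < - theta by rewrite oppr_gt0 theta_lt0.
have theta_neq0 : - theta != 0 by rewrite gt_eqF.
have k_neq0 : kR != 0 by rewrite gt_eqF ?kR_gt0.
have line_le L : L \in lines_through e gamma x -> #|L|%:R - 1 <= kR / - theta.
  by rewrite inE => /andP [/line_clique/clique_card_le ? _]; rewrite ler_pdivlMr.
have [sum_le sum_eq] := sum_le_card_mul line_le.
rewrite -sum_lines_through -/r mulrCA in sum_le sum_eq.
split; first by rewrite ler_pMr ?kR_gt0 // ler_pdivlMr // mul1r in sum_le.
have lines_eq : (forall L, L \in lines_through e gamma x -> #|L|%:R - 1 = kR / - theta) <->
                delsarte_vertex e R (bi 0) gamma x.
  split=> [all_eq C C_x|delsarte L L_x]; last by case/delsarte_cliqueE: (delsarte L L_x).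
  apply/delsarte_cliqueE; split; last exact: all_eq.
  by move: C_x; rewrite inE => /andP [/line_clique].
rewrite -lines_eq -sum_eq; split=> [->|k_eq]; first by rewrite divff ?mulr1.
have r_div : r / - theta = 1 by apply: (mulfI k_neq0); rewrite mulr1 -k_eq.
by rewrite -(divfK theta_neq0 r) r_div mul1r.
Qed.

End Lines.

End RhoFactorisation.

Section ClassicalParameters.
Variables (b : int) (alpha beta : R).
Hypothesis b_gt1 : 1 < b.
Hypothesis bi_classical : forall i, (i < D)%N ->
  (bi i)%:R = (qbr R b D - qbr R b i) * (beta - alpha * qbr R b i).
Hypothesis ci_classical : forall i, (1 <= i <= D)%N ->
  (ci i)%:R = qbr R b i * (1 + alpha * qbr R b i.-1).

Local Notation qn := (qbr R b).

Definition classical_rho (i : nat) : R := (qn D - qn i) / qn i.+1.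

Lemma classical_rho_gt0 i : (i < D)%N -> 0 < classical_rho i.
Proof. by move=> lt_iD; rewrite divr_gt0 ?subr_gt0 ?qbr_lt ?qbr_gt0. Qed.

Lemma kR_classical : kR = qn D * beta.
Proof. by rewrite /kR bi_classical // qbr0 mulr0 !subr0. Qed.

Lemma bR_classical i : (i <= D)%N -> bR i = (qn D - qn i) * (beta - alpha * qn i).
Proof.
rewrite /bR leq_eqVlt => /predU1P [->|lt_iD]; last by rewrite lt_iD bi_classical.
by rewrite ltnn subrr mul0r.
Qed.

Lemma cR_classical i : (0 < i <= D)%N -> cR i = qn i * (1 + alpha * qn i.-1).
Proof. by move=> i_range; rewrite /cR i_range ci_classical. Qed.

Lemma classical_rho_factor i : (i <= D)%N ->
  aR i - (if i is i'.+1 then bR i' / classical_rho i' else 0) - cR i.+1 * classical_rho i =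
  - qn D.
Proof.
move=> le_iD.
have c_rho : cR i.+1 * classical_rho i = (1 + alpha * qn i) * (qn D - qn i).
  move: le_iD; rewrite leq_eqVlt => /predU1P [->|lt_iD].
    by rewrite cR_out /classical_rho subrr !mul0r mulr0.
  have q_neq0 : qn i.+1 != 0 by rewrite gt_eqF ?qbr_gt0.
  by rewrite cR_classical ?lt_iD //= /classical_rho; field.
rewrite /aR kR_classical (bR_classical le_iD) c_rho.
case: i le_iD {c_rho} => [|i] le_iD; first by rewrite /cR /= qbr0; ring.
have b_rho : bR i / classical_rho i = qn i.+1 * (beta - alpha * qn i).
  have q_neq0 : qn i.+1 != 0 by rewrite gt_eqF ?qbr_gt0.
  have gap_neq0 : qn D - qn i != 0 by rewrite subr_eq0 gt_eqF ?qbr_lt.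
  by rewrite (bR_classical (ltnW le_iD)) /classical_rho; field; rewrite q_neq0 gap_neq0.
by rewrite b_rho cR_classical //=; ring.
Qed.

End ClassicalParameters.

End DistanceRegular.

Unset Implicit Arguments.

Theorem lemma10 (R : realType) (T : finType) (e : rel T) (D : nat)
  (bi ci : nat -> nat) (b : int) (alpha beta : R) (gamma : nat) :
  distance_regular e D bi ci ->
  classical_parameters D b alpha beta bi ci ->
  (2 <= b)%R -> (3 <= D)%N ->
  PLS_property e gamma ->
  forall x : T,
    qbr R b D <= (#|lines_through e gamma x|)%:R /\
    ((#|lines_through e gamma x|)%:R = qbr R b D <->
       @delsarte_vertex T e R (bi 0%N) gamma x).
Proof.
move=> [[e_sym e_irr] ball_D sphere_D drg] [_ [bi_cl ci_cl]] b_ge2 D_ge3.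
move=> [_ [line_uniq adj_line]] x.
have D_gt0 : (0 < D)%N by apply: leq_trans D_ge3.
have b_gt1 : 1 < b by apply: lt_le_trans b_ge2.
have := card_lines_through e_sym e_irr D_gt0 ball_D sphere_D drg
  (classical_rho_gt0 R b_gt1) (classical_rho_factor D_gt0 b_gt1 bi_cl ci_cl)
  line_uniq adj_line x.
by rewrite opprK.
Qed.
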